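(* Let $\mathbf p$ be an agreeable memory-one strategy for X and write its X Press-Dyson vector as $\tilde{\mathbf p}=\mathbf p-(1,1,0,0)=\alpha\mathbf S_X+\beta\mathbf S_Y+\gamma\mathbf 1+\delta\mathbf e_{23}$, where $\mathbf 1=(1,1,1,1)$ and $\mathbf e_{23}=(0,1,1,0)$. Assume $(\alpha,\beta,\gamma,\delta)\neq(0,0,0,0)$ (i.e. $\mathbf p\ne(1,1,0,0)$). Then $\mathbf p$ is of Nash type if and only if $$\max\Big(\frac{\delta}{T-S},\ \frac{\delta}{2R-(T+S)}\Big)\le\alpha,$$ and $\mathbf p$ is good if and only if this inequality is strict.
   Context: Iterated Prisoner's Dilemma: payoffs $T>R>P>S$ with $2R>T+S$; outcomes of a round are ordered $cc,cd,dc,dd$ (first letter X's play, second Y's; $c$ = cooperate, $d$ = defect); payoff vectors $\mathbf S_X=(R,S,T,P)$, $\mathbf S_Y=(R,T,S,P)$. The vectors $\mathbf S_X,\mathbf S_Y,\mathbf 1,\mathbf e_{23}$ form a basis of $\mathbb R^4$. A memory-one strategy for X is $\mathbf p=(p_1,p_2,p_3,p_4)\in[0,1]^4$, where $p_i$ is the probability that X plays $c$ in the next round given that the current round had the $i$-th outcome. A strategy pattern for Y is an arbitrary (possibly randomized and history-dependent) rule for Y's play in each round. Given initial plays and the rules used, let $\mathbf v^n$ be the probability distribution of the outcome of round $n$; a limit distribution is any limit point $\mathbf v$ of the Cesàro averages $\frac1n\sum_{k=1}^n\mathbf v^k$, and the associated expected payoffs are $s_X=\langle\mathbf v\cdot\mathbf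 S_X\rangle$, $s_Y=\langle\mathbf v\cdot\mathbf S_Y\rangle$. $\mathbf p$ is agreeable if $p_1=1$. $\mathbf p$ is of Nash type if it is agreeable and, for every strategy pattern of Y and every associated limit distribution, $s_Y\ge R$ implies $s_Y=R$. $\mathbf p$ is good if it is agreeable and, for every strategy pattern of Y and every associated limit distribution, $s_Y\ge R$ implies $s_Y=s_X=R$. *)

From Stdlib Require Import Reals List.
Import ListNotations.
Open Scope R_scope.

(* Outcomes of a round, in the order cc, cd, dc, dd (X's play first). *)
Inductive outcome := CC | CD | DC | DD.

Definition all_outcomes : list outcome := [CC; CD; DC; DD].

(* true = cooperate *)
Definition xplay (o : outcome) : bool :=
  match o with CC | CD => true | _ => false end.
Definition yplay (o : outcome) : bool :=
  match o with CC | DC => true | _ => false end.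

Definition bern (a : R) (b : bool) : R := if b then a else 1 - a.

Definition sumR {A} (f : A -> R) (l : list A) : R :=
  fold_right (fun x acc => f x + acc) 0 l.

Definition memory_one (p : outcome -> R) : Prop :=
  forall o, 0 <= p o <= 1.

Definition agreeable (p : outcome -> R) : Prop := p CC = 1.

(* A strategy pattern for Y: a behaviour rule giving the probability that
   Y cooperates next, as a function of the whole past history (list of
   outcomes, most recent first; [] = first round). *)
Definition strategy_pattern (q : list outcome -> R) : Prop :=
  forall h, 0 <= q h <= 1.

(* Probability that the next round has outcome o given history h,
   where x0 is X's initial probability of cooperating. *)
Definition step (p : outcome -> R) (x0 : R) (q : list outcome -> R)
  (h : list outcome) (o : outcome) : R :=
  let px := match h with [] => x0 | o' :: _ => p o' end in
  bern px (xplay o) * bern (q h) (yplay o).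

Fixpoint hist_prob p x0 q (h : list outcome) : R :=
  match h with
  | [] => 1
  | o :: h' => hist_prob p x0 q h' * step p x0 q h' o
  end.

Fixpoint all_hist (n : nat) : list (list outcome) :=
  match n with
  | O => [ [] ]
  | S n' => flat_map (fun h => map (fun o => o :: h) all_outcomes) (all_hist n')
  end.

(* v^{n+1}: distribution of the outcome of round n+1 *)
Definition vround p x0 q (n : nat) (o : outcome) : R :=
  sumR (fun h => hist_prob p x0 q h * step p x0 q h o) (all_hist n).

Definition cesaro p x0 q (n : nat) (o : outcome) : R :=
  sumR (fun k => vround p x0 q k o) (seq 0 (S n)) / INR (S n).

Definition limit_distribution p x0 q (v : outcome -> R) : Prop :=
  forall eps, 0 < eps -> forall N : nat, exists n : nat, (N <= n)%nat /\
    forall o, Rabs (cesaro p x0 q n o - v o) < eps.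

Definition sX (Tp Rp Pp Sp : R) (v : outcome -> R) : R :=
  v CC * Rp + v CD * Sp + v DC * Tp + v DD * Pp.
Definition sY (Tp Rp Pp Sp : R) (v : outcome -> R) : R :=
  v CC * Rp + v CD * Tp + v DC * Sp + v DD * Pp.

Definition nash_type (Tp Rp Pp Sp : R) (p : outcome -> R) : Prop :=
  agreeable p /\
  forall x0 q v, 0 <= x0 <= 1 -> strategy_pattern q ->
    limit_distribution p x0 q v ->
    sY Tp Rp Pp Sp v >= Rp -> sY Tp Rp Pp Sp v = Rp.

Definition good (Tp Rp Pp Sp : R) (p : outcome -> R) : Prop :=
  agreeable p /\
  forall x0 q v, 0 <= x0 <= 1 -> strategy_pattern q ->
    limit_distribution p x0 q v ->
    sY Tp Rp Pp Sp v >= Rp -> sY Tp Rp Pp Sp v = Rp /\ sX Tp Rp Pp Sp v = Rp.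

Definition press_dyson (Tp Rp Pp Sp : R) (p : outcome -> R) (a b g d : R) : Prop :=
  p CC - 1 = a * Rp + b * Rp + g /\
  p CD - 1 = a * Sp + b * Tp + g + d /\
  p DC = a * Tp + b * Sp + g + d /\
  p DD = a * Pp + b * Pp + g.

(* For an agreeable p, Akin's lemma says that every limit distribution v of play is orthogonal
   to p - (1,1,0,0), i.e. (1 - p2) v2 = p3 v3 + p4 v4.  With v1 + v2 + v3 + v4 = 1 this gives
     (1 - p2) (s_Y - R) = - v3 K1 - v4 K2,
   where K1 = (R-S)(1-p2) - (T-R)p3 and K2 = (R-P)(1-p2) - (T-R)p4.  So K1, K2 >= 0 (resp. > 0)
   makes p of Nash type (resp. good); p2 < 1 here because p <> (1,1,0,0).  Conversely, if K2 < 0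
   (resp. K1 < 0) then Y earns more than R by always defecting (resp. by defecting exactly after
   mutual cooperation), and if K2 = 0 (resp. K1 = 0) that challenger earns exactly R against a
   distribution with v1 < 1, on which s_X + s_Y < 2R.  In Press-Dyson coordinates
   K1 = (T-S)(alpha (2R-T-S) - delta) and K2 = (R-P)(alpha (T-S) - delta). *)

From Stdlib Require Import Reals Lra Lia List.
Open Scope R_scope.

Lemma sumR_ext {A} (f g : A -> R) l : (forall x, f x = g x) -> sumR f l = sumR g l.
Proof. intro H; induction l; simpl; [lra | rewrite IHl, H; lra]. Qed.

Lemma sumR_add {A} (f g : A -> R) l : sumR (fun x => f x + g x) l = sumR f l + sumR g l.
Proof. induction l; simpl; [lra | rewrite IHl; lra]. Qed.

Lemma sumR_scal {A} (c : R) (f : A -> R) l : sumR (fun x => c * f x) l = c * sumR f l.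
Proof. induction l; simpl; [lra | rewrite IHl; lra]. Qed.

Lemma sumR_app {A} (f : A -> R) l1 l2 : sumR f (l1 ++ l2) = sumR f l1 + sumR f l2.
Proof. induction l1; simpl; [lra | rewrite IHl1; lra]. Qed.

Lemma sumR_flat_map {A B} (f : B -> R) (g : A -> list B) l :
  sumR f (flat_map g l) = sumR (fun x => sumR f (g x)) l.
Proof. induction l; simpl; [lra | rewrite sumR_app, IHl; lra]. Qed.

Lemma sumR_map {A B} (f : B -> R) (g : A -> B) l :
  sumR f (map g l) = sumR (fun x => f (g x)) l.
Proof. induction l; simpl; [lra | rewrite IHl; lra]. Qed.

Lemma sumR_nonneg {A} (f : A -> R) l : (forall x, 0 <= f x) -> 0 <= sumR f l.
Proof. intro H; induction l; simpl; [lra | specialize (H a); lra]. Qed.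

Lemma sumR_eq0 {A} (f : A -> R) l : (forall x, f x = 0) -> sumR f l = 0.
Proof. intro H; induction l; simpl; [lra | rewrite H; lra]. Qed.

Lemma sumR_const1 {A} (l : list A) : sumR (fun _ => 1) l = INR (length l).
Proof. induction l; simpl sumR; simpl length; [simpl; lra | rewrite S_INR; lra]. Qed.

Lemma sumR_telescope (f : nat -> R) n :
  sumR (fun k => f (S k) - f k) (seq 0 (S n)) = f (S n) - f O.
Proof. induction n; [simpl; ring |]. rewrite seq_S, sumR_app, IHn; simpl; ring. Qed.

Lemma Rabs_le_bounds x y : Rabs x <= y -> - y <= x <= y.
Proof.
  intro H; pose proof (Rle_abs x); pose proof (Rle_abs (- x)).
  rewrite Rabs_Ropp in *; lra.
Qed.

Definition cluster_point (u : nat -> R) (l : R) : Prop :=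
  forall eps, 0 < eps -> forall N, exists n, (N <= n)%nat /\ Rabs (u n - l) < eps.

Lemma div_INR_S_eventually_lt B eps :
  0 < eps -> exists M, forall n, (M <= n)%nat -> B / INR (S n) < eps.
Proof.
  intro Heps; destruct (INR_unbounded (B / eps)) as [M HM]; exists M; intros n Hn.
  assert (HMn : INR M <= INR n) by (apply le_INR; exact Hn).
  rewrite S_INR; unfold Rdiv.
  apply (Rmult_lt_reg_r (INR n + 1)); [pose proof (pos_INR n); lra |].
  rewrite Rmult_assoc, Rinv_l, Rmult_1_r by (pose proof (pos_INR n); lra).
  assert (HB : B = eps * (B / eps)) by (field; lra).
  rewrite HB at 1; apply Rmult_lt_compat_l; lra.
Qed.

Lemma cluster_point_unique (u : nat -> R) l r B :
  cluster_point u l -> (forall n, Rabs (u n - r) <= B / INR (S n)) -> l = r.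
Proof.
  intros Hl Hr; destruct (Req_dec l r) as [| Hne]; [assumption | exfalso].
  assert (HE : 0 < Rabs (l - r)) by (apply Rabs_pos_lt; lra).
  destruct (div_INR_S_eventually_lt B (Rabs (l - r) / 2)) as [M HM]; [lra |].
  destruct (Hl (Rabs (l - r) / 2) ltac:(lra) M) as [n [Hn Hun]].
  specialize (HM n Hn); specialize (Hr n).
  pose proof (Rabs_triang (l - u n) (u n - r)) as Htri.
  rewrite Rabs_minus_sym in Htri; replace (l - u n + (u n - r)) with (l - r) in Htri by ring.
  lra.
Qed.

Lemma cluster_point_nonneg (u : nat -> R) l :
  cluster_point u l -> (forall n, 0 <= u n) -> 0 <= l.
Proof.
  intros Hl Hu; destruct (Rle_lt_dec 0 l) as [| Hneg]; [assumption | exfalso].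
  destruct (Hl (- l) ltac:(lra) O) as [n [_ Hn]].
  specialize (Hu n); apply Rabs_def2 in Hn; lra.
Qed.

Lemma cluster_point_exists (u : nat -> R) :
  (forall n, 0 <= u n <= 1) -> exists l, cluster_point u l.
Proof.
  intro Hu; destruct (Bolzano_Weierstrass u _ (compact_P3 0 1) Hu) as [l Hl].
  exists l; intros eps Heps N.
  destruct (Hl (fun y => Rabs (y - l) < eps) N) as [n Hn]; [| exists n; exact Hn].
  exists (mkposreal eps Heps); intros y Hy; exact Hy.
Qed.

Definition dot4 (c1 c2 c3 c4 : R) (v : outcome -> R) : R :=
  c1 * v CC + c2 * v CD + c3 * v DC + c4 * v DD.

Lemma Rabs_dot4_sub_le c1 c2 c3 c4 (u w : outcome -> R) eps :
  (forall o, Rabs (u o - w o) < eps) ->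
  Rabs (dot4 c1 c2 c3 c4 u - dot4 c1 c2 c3 c4 w) <=
    (Rabs c1 + Rabs c2 + Rabs c3 + Rabs c4) * eps.
Proof.
  intro Huw.
  assert (Hterm : forall c o, Rabs (c * (u o - w o)) <= Rabs c * eps).
  { intros c o; rewrite Rabs_mult.
    apply Rmult_le_compat_l; [apply Rabs_pos | left; apply Huw]. }
  replace (dot4 c1 c2 c3 c4 u - dot4 c1 c2 c3 c4 w) with
    (c1 * (u CC - w CC) + c2 * (u CD - w CD) + c3 * (u DC - w DC) + c4 * (u DD - w DD))
    by (unfold dot4; ring).
  pose proof (Rabs_triang (c1 * (u CC - w CC) + c2 * (u CD - w CD) + c3 * (u DC - w DC))
                (c4 * (u DD - w DD))).
  pose proof (Rabs_triang (c1 * (u CC - w CC) + c2 * (u CD - w CD)) (c3 * (u DC - w DC))).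
  pose proof (Rabs_triang (c1 * (u CC - w CC)) (c2 * (u CD - w CD))).
  pose proof (Hterm c1 CC); pose proof (Hterm c2 CD); pose proof (Hterm c3 DC);
    pose proof (Hterm c4 DD).
  lra.
Qed.

Section Play.
Variables (p : outcome -> R) (x0 : R) (q : list outcome -> R).

Lemma sum_all_hist_S k (F : list outcome -> R) :
  sumR (fun h => hist_prob p x0 q h * F h) (all_hist (S k)) =
  sumR (fun h => hist_prob p x0 q h *
     (step p x0 q h CC * F (CC :: h) + step p x0 q h CD * F (CD :: h)
      + step p x0 q h DC * F (DC :: h) + step p x0 q h DD * F (DD :: h))) (all_hist k).
Proof.
  cbn [all_hist]; rewrite sumR_flat_map; apply sumR_ext; intro h.
  rewrite sumR_map; cbn [sumR fold_right all_outcomes hist_prob]; ring.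
Qed.

Lemma step_total h :
  step p x0 q h CC + step p x0 q h CD + step p x0 q h DC + step p x0 q h DD = 1.
Proof. unfold step, bern; simpl; ring. Qed.

Lemma hist_prob_total k : sumR (hist_prob p x0 q) (all_hist k) = 1.
Proof.
  induction k as [| k IHk]; [simpl; lra |].
  transitivity (sumR (fun h => hist_prob p x0 q h * 1) (all_hist (S k)));
    [apply sumR_ext; intro; ring |].
  rewrite sum_all_hist_S, <- IHk; apply sumR_ext; intro h.
  pose proof (step_total h); nra.
Qed.

Lemma dot4_vround k c1 c2 c3 c4 :
  dot4 c1 c2 c3 c4 (vround p x0 q k) =
  sumR (fun h => hist_prob p x0 q h * dot4 c1 c2 c3 c4 (step p x0 q h)) (all_hist k).
Proof.
  unfold dot4, vround; rewrite <- !sumR_scal, <- !sumR_add; apply sumR_ext; intro; ring.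
Qed.

Lemma vround_total k : dot4 1 1 1 1 (vround p x0 q k) = 1.
Proof.
  rewrite dot4_vround; transitivity (sumR (hist_prob p x0 q) (all_hist k));
    [apply sumR_ext; intro h | apply hist_prob_total].
  unfold dot4; rewrite !Rmult_1_l, step_total; ring.
Qed.

Lemma vround_S k o :
  vround p x0 q (S k) o =
  sumR (fun h => hist_prob p x0 q h *
     (step p x0 q h CC * step p x0 q (CC :: h) o + step p x0 q h CD * step p x0 q (CD :: h) o
      + step p x0 q h DC * step p x0 q (DC :: h) o
      + step p x0 q h DD * step p x0 q (DD :: h) o)) (all_hist k).
Proof. apply sum_all_hist_S. Qed.

(* [vround k] is the outcome of round k+1, so X's move in round k+2 is drawn from it by p. *)
Lemma vround_S_xcoop k :
  vround p x0 q (S k) CC + vround p x0 q (S k) CD =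
  dot4 (p CC) (p CD) (p DC) (p DD) (vround p x0 q k).
Proof.
  rewrite !vround_S, <- sumR_add, dot4_vround; apply sumR_ext; intro h.
  unfold dot4, step, bern; simpl; ring.
Qed.

Lemma dot4_cesaro n c1 c2 c3 c4 :
  dot4 c1 c2 c3 c4 (cesaro p x0 q n) =
  sumR (fun k => dot4 c1 c2 c3 c4 (vround p x0 q k)) (seq 0 (S n)) / INR (S n).
Proof. unfold dot4, cesaro, Rdiv; rewrite !sumR_add, !sumR_scal; ring. Qed.

Lemma cesaro_total n : dot4 1 1 1 1 (cesaro p x0 q n) = 1.
Proof.
  rewrite dot4_cesaro, (sumR_ext _ (fun _ => 1)) by (intro; apply vround_total).
  rewrite sumR_const1, length_seq; field; apply not_0_INR; lia.
Qed.

Lemma cesaro_eq0 o n : (forall k, vround p x0 q k o = 0) -> cesaro p x0 q n o = 0.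
Proof. intro H; unfold cesaro; rewrite sumR_eq0 by exact H; unfold Rdiv; ring. Qed.

Lemma limit_distribution_dot4 v c1 c2 c3 c4 :
  limit_distribution p x0 q v ->
  cluster_point (fun n => dot4 c1 c2 c3 c4 (cesaro p x0 q n)) (dot4 c1 c2 c3 c4 v).
Proof.
  intros Hv eps Heps N.
  set (K := Rabs c1 + Rabs c2 + Rabs c3 + Rabs c4 + 1).
  assert (HK : 0 < K).
  { unfold K; pose proof (Rabs_pos c1); pose proof (Rabs_pos c2);
      pose proof (Rabs_pos c3); pose proof (Rabs_pos c4); lra. }
  assert (HeK : 0 < eps / K) by (apply Rdiv_lt_0_compat; lra).
  destruct (Hv (eps / K) HeK N) as [n [Hn Hc]]; exists n; split; [exact Hn |].
  pose proof (Rabs_dot4_sub_le c1 c2 c3 c4 _ _ _ Hc) as Hle.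
  assert (Hsum : (Rabs c1 + Rabs c2 + Rabs c3 + Rabs c4) * (eps / K) < K * (eps / K))
    by (apply Rmult_lt_compat_r; [exact HeK | unfold K; lra]).
  replace (K * (eps / K)) with eps in Hsum by (field; lra).
  lra.
Qed.

Lemma limit_distribution_of_cluster (u : nat -> R) l v B :
  cluster_point u l ->
  (forall n o, Rabs (cesaro p x0 q n o - v o) <= Rabs (u n - l) + B / INR (S n)) ->
  limit_distribution p x0 q v.
Proof.
  intros Hl Hb eps Heps N.
  destruct (div_INR_S_eventually_lt B (eps / 2)) as [M HM]; [lra |].
  destruct (Hl (eps / 2) ltac:(lra) (max N M)) as [n [Hn Hun]].
  exists n; split; [lia |]; intro o.
  specialize (Hb n o); specialize (HM n ltac:(lia)); lra.
Qed.

Lemma cesaro_telescope_bound n c1 c2 c3 c4 (f : nat -> R) :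
  (forall k, dot4 c1 c2 c3 c4 (vround p x0 q k) = f (S k) - f k) ->
  (forall k, 0 <= f k <= 1) ->
  Rabs (dot4 c1 c2 c3 c4 (cesaro p x0 q n)) <= 1 / INR (S n).
Proof.
  intros Hf Hb.
  rewrite dot4_cesaro, (sumR_ext _ (fun k => f (S k) - f k)) by apply Hf.
  rewrite sumR_telescope.
  assert (HS : 0 < / INR (S n)) by (apply Rinv_0_lt_compat, lt_0_INR; lia).
  unfold Rdiv; rewrite Rabs_mult, (Rabs_right (/ _)), Rmult_1_l by lra.
  rewrite <- (Rmult_1_l (/ INR (S n))) at 2; apply Rmult_le_compat_r; [lra |].
  apply Rabs_le; pose proof (Hb (S n)); pose proof (Hb O); lra.
Qed.

Hypotheses (Hp : memory_one p) (Hx0 : 0 <= x0 <= 1) (Hq : strategy_pattern q).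

Lemma step_nonneg h o : 0 <= step p x0 q h o.
Proof.
  unfold step, bern; pose proof (Hq h).
  destruct h as [| o' h]; [| pose proof (Hp o')];
    destruct (xplay o), (yplay o); apply Rmult_le_pos; lra.
Qed.

Lemma hist_prob_nonneg h : 0 <= hist_prob p x0 q h.
Proof.
  induction h; simpl; [lra |]; apply Rmult_le_pos; [assumption | apply step_nonneg].
Qed.

Lemma vround_nonneg k o : 0 <= vround p x0 q k o.
Proof.
  apply sumR_nonneg; intro.
  apply Rmult_le_pos; [apply hist_prob_nonneg | apply step_nonneg].
Qed.

Lemma cesaro_nonneg n o : 0 <= cesaro p x0 q n o.
Proof.
  apply Rmult_le_pos; [apply sumR_nonneg; intro; apply vround_nonneg |].
  left; apply Rinv_0_lt_compat, lt_0_INR; lia.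
Qed.

Variable v : outcome -> R.
Hypothesis Hv : limit_distribution p x0 q v.

Lemma limit_distribution_nonneg o : 0 <= v o.
Proof.
  apply (cluster_point_nonneg (fun n => cesaro p x0 q n o)); [| intro; apply cesaro_nonneg].
  intros eps Heps N; destruct (Hv eps Heps N) as [n [Hn Hc]]; exists n; auto.
Qed.

Lemma limit_distribution_total : dot4 1 1 1 1 v = 1.
Proof.
  apply (cluster_point_unique _ _ 1 0 (limit_distribution_dot4 v 1 1 1 1 Hv)); intro n.
  rewrite cesaro_total, Rminus_diag, Rabs_R0; unfold Rdiv; lra.
Qed.

(* Akin's lemma: X's cooperation probabilities in consecutive rounds differ by the pairing of
   the current outcome distribution with p - (1,1,0,0), so the Cesaro averages telescope. *)
Lemma limit_akin : dot4 (p CC - 1) (p CD - 1) (p DC) (p DD) v = 0.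
Proof.
  apply (cluster_point_unique _ _ 0 1 (limit_distribution_dot4 v _ _ _ _ Hv)); intro n.
  rewrite Rminus_0_r.
  apply (cesaro_telescope_bound n _ _ _ _
           (fun k => vround p x0 q k CC + vround p x0 q k CD)).
  - intro k; rewrite vround_S_xcoop; unfold dot4; ring.
  - intro k; pose proof (vround_total k); unfold dot4 in *.
    pose proof (vround_nonneg k CC); pose proof (vround_nonneg k CD);
      pose proof (vround_nonneg k DC); pose proof (vround_nonneg k DD); lra.
Qed.

End Play.

Definition always_defect (h : list outcome) : R := 0.

Definition defect_after_cc (h : list outcome) : R :=
  match h with CC :: _ => 0 | _ => 1 end.

Lemma always_defect_pattern : strategy_pattern always_defect.
Proof. intro; unfold always_defect; lra. Qed.

Lemma defect_after_cc_pattern : strategy_pattern defect_after_cc.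
Proof. intros [| [] h]; simpl; lra. Qed.

Section AlwaysDefect.
Variable p : outcome -> R.
Hypothesis Hp : memory_one p.
Local Notation ces := (cesaro p 1 always_defect).

Lemma always_defect_limit_exists :
  exists v, limit_distribution p 1 always_defect v /\
    v CC = 0 /\ v DC = 0 /\ v DD = 1 - v CD.
Proof.
  assert (Hcoop : forall n o, yplay o = true -> ces n o = 0).
  { intros n o Ho; apply cesaro_eq0; intro k; apply sumR_eq0; intro h.
    unfold step, bern, always_defect; rewrite Ho; ring. }
  assert (HCC := fun n => Hcoop n CC eq_refl); assert (HDC := fun n => Hcoop n DC eq_refl).
  assert (HDD : forall n, ces n DD = 1 - ces n CD).
  { intro n; pose proof (cesaro_total p 1 always_defect n) as Ht; unfold dot4 in Ht.
    rewrite HCC, HDC in Ht; lra. }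
  pose proof (cesaro_nonneg p 1 always_defect Hp ltac:(lra) always_defect_pattern) as Hnn.
  destruct (cluster_point_exists (fun n => ces n CD)) as [l Hl].
  { intro n; pose proof (HDD n); pose proof (Hnn n CD); pose proof (Hnn n DD); lra. }
  exists (fun o => match o with CD => l | DD => 1 - l | _ => 0 end).
  split; [| repeat split; lra].
  apply (limit_distribution_of_cluster p 1 always_defect _ l _ 0 Hl); intros n o.
  unfold Rdiv; rewrite Rmult_0_l, Rplus_0_r.
  destruct o.
  - rewrite HCC, Rminus_0_r, Rabs_R0; apply Rabs_pos.
  - apply Rle_refl.
  - rewrite HDC, Rminus_0_r, Rabs_R0; apply Rabs_pos.
  - rewrite HDD, <- Rabs_Ropp; apply Req_le; f_equal; ring.
Qed.

End AlwaysDefect.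

(* Against an agreeable p, dd never occurs and every cc is followed by cd, which forces limit
   distributions of the form (m, m, 1 - 2m, 0). *)
Section DefectAfterCC.
Variable p : outcome -> R.
Hypotheses (Hp : memory_one p) (Ha : agreeable p).
Local Notation vr := (vround p 1 defect_after_cc).
Local Notation ces := (cesaro p 1 defect_after_cc).

Lemma defect_after_cc_no_dd n : ces n DD = 0.
Proof.
  unfold agreeable in Ha; apply cesaro_eq0; intro k; apply sumR_eq0; intro h.
  destruct h as [| [] h]; unfold step, bern, defect_after_cc; simpl; try rewrite Ha; ring.
Qed.

Lemma defect_after_cc_shift k : vr (S k) CD = vr k CC.
Proof.
  unfold agreeable in Ha; rewrite vround_S; apply sumR_ext; intro h.
  unfold step at 2 4 6 8, bern, defect_after_cc; simpl; rewrite Ha; ring.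
Qed.

Lemma defect_after_cc_cc_cd n : Rabs (ces n CC - ces n CD) <= 1 / INR (S n).
Proof.
  replace (ces n CC - ces n CD) with (dot4 1 (-1) 0 0 (ces n)) by (unfold dot4; ring).
  apply (cesaro_telescope_bound p 1 defect_after_cc n _ _ _ _ (fun k => vr k CD)).
  - intro k; rewrite defect_after_cc_shift; unfold dot4; ring.
  - intro k; pose proof (vround_total p 1 defect_after_cc k) as Ht; unfold dot4 in Ht.
    pose proof (vround_nonneg p 1 defect_after_cc Hp ltac:(lra) defect_after_cc_pattern k) as Hnn.
    pose proof (Hnn CC); pose proof (Hnn CD); pose proof (Hnn DC); pose proof (Hnn DD); lra.
Qed.

Lemma defect_after_cc_limit_exists :
  exists v, limit_distribution p 1 defect_after_cc v /\
    v DD = 0 /\ v CD = v CC /\ v DC = 1 - 2 * v CC.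
Proof.
  assert (Htot : forall n, ces n CC + ces n CD + ces n DC = 1).
  { intro n; pose proof (cesaro_total p 1 defect_after_cc n) as Ht; unfold dot4 in Ht.
    rewrite defect_after_cc_no_dd in Ht; lra. }
  pose proof (cesaro_nonneg p 1 defect_after_cc Hp ltac:(lra) defect_after_cc_pattern) as Hnn.
  destruct (cluster_point_exists (fun n => ces n DC)) as [l Hl].
  { intro n; pose proof (Htot n); pose proof (Hnn n CC); pose proof (Hnn n CD);
      pose proof (Hnn n DC); lra. }
  exists (fun o => match o with CC | CD => (1 - l) / 2 | DC => l | DD => 0 end).
  split; [| repeat split; lra].
  apply (limit_distribution_of_cluster p 1 defect_after_cc _ l _ 1 Hl); intros n o.
  pose proof (Rabs_le_bounds _ _ (defect_after_cc_cc_cd n)); specialize (Htot n).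
  pose proof (Rabs_le_bounds _ _ (Rle_refl (Rabs (ces n DC - l)))).
  assert (0 <= 1 / INR (S n)) by (apply Rlt_le, Rdiv_lt_0_compat; [lra | apply lt_0_INR; lia]).
  destruct o; [| | | rewrite defect_after_cc_no_dd]; apply Rabs_le; lra.
Qed.

End DefectAfterCC.

Section Game.
Variables Tp Rp Pp Sp : R.
Hypotheses (HTR : Tp > Rp) (HRP : Rp > Pp) (HPS : Pp > Sp) (H2R : 2 * Rp > Tp + Sp).
Variable p : outcome -> R.
Hypotheses (Hp : memory_one p) (Ha : agreeable p).

Definition defect_after_cc_margin : R := (Rp - Sp) * (1 - p CD) - (Tp - Rp) * p DC.
Definition always_defect_margin : R := (Rp - Pp) * (1 - p CD) - (Tp - Rp) * p DD.

Lemma payoff_sum_lt (v : outcome -> R) :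
  (forall o, 0 <= v o) -> dot4 1 1 1 1 v = 1 -> v CC < 1 ->
  sX Tp Rp Pp Sp v + sY Tp Rp Pp Sp v < 2 * Rp.
Proof.
  unfold dot4, sX, sY; intros Hnn Htot Hcc.
  pose proof (Hnn CD); pose proof (Hnn DC); pose proof (Hnn DD).
  replace (v CC) with (1 - v CD - v DC - v DD) by lra.
  destruct (Rlt_or_le 0 (v CD + v DC)); nra.
Qed.

Section Limit.
Variables (x0 : R) (q : list outcome -> R) (v : outcome -> R).
Hypotheses (Hx0 : 0 <= x0 <= 1) (Hq : strategy_pattern q).
Hypothesis Hv : limit_distribution p x0 q v.

Lemma limit_cd_balance : (1 - p CD) * v CD = p DC * v DC + p DD * v DD.
Proof.
  pose proof (limit_akin p x0 q Hp Hx0 Hq v Hv) as Hakin.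
  unfold dot4 in Hakin; unfold agreeable in Ha; rewrite Ha in Hakin; lra.
Qed.

Lemma limit_sY_identity :
  (1 - p CD) * (sY Tp Rp Pp Sp v - Rp) =
    - v DC * defect_after_cc_margin - v DD * always_defect_margin.
Proof.
  pose proof limit_cd_balance as Hbal.
  pose proof (limit_distribution_total p x0 q v Hv) as Htot; unfold dot4 in Htot.
  unfold sY, defect_after_cc_margin, always_defect_margin.
  replace (v CC) with (1 - v CD - v DC - v DD) by lra.
  assert (E : (1 - p CD) * ((1 - v CD - v DC - v DD) * Rp + v CD * Tp + v DC * Sp + v DD * Pp - Rp)
              - (- v DC * ((Rp - Sp) * (1 - p CD) - (Tp - Rp) * p DC)
                 - v DD * ((Rp - Pp) * (1 - p CD) - (Tp - Rp) * p DD))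
              = (Tp - Rp) * ((1 - p CD) * v CD - (p DC * v DC + p DD * v DD))) by ring.
  rewrite Hbal, Rminus_diag, Rmult_0_r in E; lra.
Qed.

End Limit.

Lemma limit_distribution_bounds x0 q v :
  0 <= x0 <= 1 -> strategy_pattern q -> limit_distribution p x0 q v ->
  forall o, 0 <= v o <= 1.
Proof.
  intros Hx0 Hq Hv o; pose proof (limit_distribution_total p x0 q v Hv) as Htot.
  unfold dot4 in Htot; pose proof (limit_distribution_nonneg p x0 q Hp Hx0 Hq v Hv) as Hnn.
  pose proof (Hnn CC); pose proof (Hnn CD); pose proof (Hnn DC); pose proof (Hnn DD).
  destruct o; lra.
Qed.

Lemma always_defect_challenger :
  exists v, limit_distribution p 1 always_defect v /\ v CC = 0 /\
    (1 - p CD + p DD) * (sY Tp Rp Pp Sp v - Rp) = - always_defect_margin.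
Proof.
  destruct (always_defect_limit_exists p Hp) as [v [Hv [HCC [HDC HDD]]]].
  exists v; split; [exact Hv | split; [exact HCC |]].
  pose proof (limit_cd_balance 1 always_defect v ltac:(lra) always_defect_pattern Hv) as Hbal.
  rewrite HDC, HDD in Hbal.
  unfold sY, always_defect_margin; rewrite HCC, HDC, HDD.
  assert (E : (1 - p CD + p DD) * (0 * Rp + v CD * Tp + 0 * Sp + (1 - v CD) * Pp - Rp)
              - - ((Rp - Pp) * (1 - p CD) - (Tp - Rp) * p DD)
              = (Tp - Pp) * ((1 - p CD) * v CD - (p DC * 0 + p DD * (1 - v CD)))) by ring.
  rewrite Hbal, Rminus_diag, Rmult_0_r in E; lra.
Qed.

Lemma defect_after_cc_challenger :
  exists v, limit_distribution p 1 defect_after_cc v /\ v CC < 1 /\ (0 < p DC -> 0 < v CC) /\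
    p DC * (sY Tp Rp Pp Sp v - Rp) = - v CC * defect_after_cc_margin.
Proof.
  destruct (defect_after_cc_limit_exists p Hp Ha) as [v [Hv [HDD [HCD HDC]]]].
  pose proof (limit_distribution_bounds 1 defect_after_cc v ltac:(lra) defect_after_cc_pattern Hv)
    as Hbd.
  pose proof (limit_cd_balance 1 defect_after_cc v ltac:(lra) defect_after_cc_pattern Hv) as Hbal.
  rewrite HDD, HCD, HDC in Hbal.
  exists v; split; [exact Hv |]; split; [pose proof (Hbd DC); lra |]; split.
  - intro Hp3; destruct (Rle_lt_or_eq_dec 0 (v CC) (proj1 (Hbd CC))) as [| Hm0]; [assumption |].
    rewrite <- Hm0 in Hbal; lra.
  - unfold sY, defect_after_cc_margin; rewrite HDD, HCD, HDC.
    assert (E : p DC * (v CC * Rp + v CC * Tp + (1 - 2 * v CC) * Sp + 0 * Pp - Rp)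
                - - v CC * ((Rp - Sp) * (1 - p CD) - (Tp - Rp) * p DC)
                = (Rp - Sp) * ((1 - p CD) * v CC - (p DC * (1 - 2 * v CC) + p DD * 0))) by ring.
    rewrite Hbal, Rminus_diag, Rmult_0_r in E; lra.
Qed.

Lemma nash_type_margins_nonneg :
  nash_type Tp Rp Pp Sp p -> 0 <= defect_after_cc_margin /\ 0 <= always_defect_margin.
Proof.
  intros [_ Hnash]; pose proof (Hp CD); pose proof (Hp DC); pose proof (Hp DD).
  split.
  - destruct (Rle_lt_dec 0 defect_after_cc_margin) as [| Hneg]; [assumption | exfalso].
    destruct defect_after_cc_challenger as [v [Hv [_ [Hpos Hid]]]].
    assert (Hp3 : 0 < p DC) by (unfold defect_after_cc_margin in Hneg; nra).
    specialize (Hpos Hp3).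
    assert (Hwin : sY Tp Rp Pp Sp v > Rp) by nra.
    specialize (Hnash 1 defect_after_cc v ltac:(lra) defect_after_cc_pattern Hv ltac:(lra)); lra.
  - destruct (Rle_lt_dec 0 always_defect_margin) as [| Hneg]; [assumption | exfalso].
    destruct always_defect_challenger as [v [Hv [_ Hid]]].
    assert (Hp4 : 0 < p DD) by (unfold always_defect_margin in Hneg; nra).
    assert (Hwin : sY Tp Rp Pp Sp v > Rp) by nra.
    specialize (Hnash 1 always_defect v ltac:(lra) always_defect_pattern Hv ltac:(lra)); lra.
Qed.

Lemma good_nash_type : good Tp Rp Pp Sp p -> nash_type Tp Rp Pp Sp p.
Proof.
  intros [Hag Hg]; split; [exact Hag |].
  intros x0 q v Hx0 Hq Hv Hs; exact (proj1 (Hg x0 q v Hx0 Hq Hv Hs)).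
Qed.

Lemma good_limit_coop x0 q v :
  good Tp Rp Pp Sp p -> 0 <= x0 <= 1 -> strategy_pattern q -> limit_distribution p x0 q v ->
  sY Tp Rp Pp Sp v >= Rp -> v CC = 1.
Proof.
  intros [_ Hg] Hx0 Hq Hv Hs; destruct (Hg x0 q v Hx0 Hq Hv Hs) as [HsY HsX].
  pose proof (limit_distribution_bounds x0 q v Hx0 Hq Hv CC).
  destruct (Rlt_or_le (v CC) 1) as [Hlt |]; [exfalso | lra].
  pose proof (payoff_sum_lt v (fun o => proj1 (limit_distribution_bounds x0 q v Hx0 Hq Hv o))
                (limit_distribution_total p x0 q v Hv) Hlt); lra.
Qed.

Lemma good_margins_pos :
  good Tp Rp Pp Sp p -> p CD < 1 -> 0 < defect_after_cc_margin /\ 0 < always_defect_margin.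
Proof.
  intros Hg Hp2; pose proof (Hp DC); pose proof (Hp DD).
  destruct (nash_type_margins_nonneg (good_nash_type Hg)) as [H1 H2]; split.
  - destruct H1 as [| H1]; [assumption | exfalso].
    destruct defect_after_cc_challenger as [v [Hv [Hlt1 [Hpos Hid]]]].
    assert (Hp3 : 0 < p DC) by (unfold defect_after_cc_margin in H1; nra).
    specialize (Hpos Hp3); rewrite <- H1, Rmult_0_r in Hid.
    assert (HsY : sY Tp Rp Pp Sp v = Rp) by nra.
    pose proof (good_limit_coop 1 defect_after_cc v Hg ltac:(lra) defect_after_cc_pattern Hv
                  ltac:(lra)); lra.
  - destruct H2 as [| H2]; [assumption | exfalso].
    destruct always_defect_challenger as [v [Hv [HCC Hid]]].
    rewrite <- H2, Ropp_0 in Hid.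
    assert (HsY : sY Tp Rp Pp Sp v = Rp) by nra.
    pose proof (good_limit_coop 1 always_defect v Hg ltac:(lra) always_defect_pattern Hv
                  ltac:(lra)); lra.
Qed.

Lemma pCD_lt1_of_margins :
  ~ (p CD = 1 /\ p DC = 0 /\ p DD = 0) ->
  0 <= defect_after_cc_margin -> 0 <= always_defect_margin -> p CD < 1.
Proof.
  unfold defect_after_cc_margin, always_defect_margin; intros Hnt H1 H2.
  pose proof (Hp CD); pose proof (Hp DC); pose proof (Hp DD).
  destruct (Rlt_or_le (p CD) 1) as [| Hge]; [assumption | exfalso].
  assert (Hp2 : p CD = 1) by lra; rewrite Hp2 in H1, H2.
  apply Hnt; repeat split; nra.
Qed.

Lemma nash_type_of_margins :
  0 <= defect_after_cc_margin -> 0 <= always_defect_margin -> p CD < 1 -> nash_type Tp Rp Pp Sp p.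
Proof.
  intros H1 H2 Hp2; split; [exact Ha |]; intros x0 q v Hx0 Hq Hv Hs.
  pose proof (limit_sY_identity x0 q v Hx0 Hq Hv) as Hid.
  pose proof (limit_distribution_bounds x0 q v Hx0 Hq Hv DC).
  pose proof (limit_distribution_bounds x0 q v Hx0 Hq Hv DD).
  nra.
Qed.

Lemma good_of_margins :
  0 < defect_after_cc_margin -> 0 < always_defect_margin -> p CD < 1 -> good Tp Rp Pp Sp p.
Proof.
  intros H1 H2 Hp2; split; [exact Ha |]; intros x0 q v Hx0 Hq Hv Hs.
  pose proof (limit_sY_identity x0 q v Hx0 Hq Hv) as Hid.
  pose proof (limit_cd_balance x0 q v Hx0 Hq Hv) as Hbal.
  pose proof (limit_distribution_total p x0 q v Hv) as Htot; unfold dot4 in Htot.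
  pose proof (limit_distribution_bounds x0 q v Hx0 Hq Hv) as Hbd.
  pose proof (Hbd CD); pose proof (Hbd DC); pose proof (Hbd DD).
  assert (HDC : v DC = 0) by (apply Rle_antisym; nra).
  assert (HDD : v DD = 0) by (apply Rle_antisym; nra).
  rewrite HDC, HDD in Hbal.
  assert (HCD : v CD = 0) by (apply Rle_antisym; nra).
  assert (HCC : v CC = 1) by lra.
  unfold sY, sX; rewrite HCC, HCD, HDC, HDD; split; ring.
Qed.

Lemma nash_type_iff_margins :
  ~ (p CD = 1 /\ p DC = 0 /\ p DD = 0) ->
  nash_type Tp Rp Pp Sp p <-> 0 <= defect_after_cc_margin /\ 0 <= always_defect_margin.
Proof.
  intro Hnt; split; [apply nash_type_margins_nonneg |].
  intros [H1 H2]; exact (nash_type_of_margins H1 H2 (pCD_lt1_of_margins Hnt H1 H2)).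
Qed.

Lemma good_iff_margins :
  ~ (p CD = 1 /\ p DC = 0 /\ p DD = 0) ->
  good Tp Rp Pp Sp p <-> 0 < defect_after_cc_margin /\ 0 < always_defect_margin.
Proof.
  intro Hnt; split.
  - intro Hg; destruct (nash_type_margins_nonneg (good_nash_type Hg)) as [H1 H2].
    exact (good_margins_pos Hg (pCD_lt1_of_margins Hnt H1 H2)).
  - intros [H1 H2].
    exact (good_of_margins H1 H2 (pCD_lt1_of_margins Hnt (Rlt_le _ _ H1) (Rlt_le _ _ H2))).
Qed.

End Game.

Lemma press_dyson_alt_margin {Tp Rp Pp Sp p a b g d} :
  press_dyson Tp Rp Pp Sp p a b g d -> agreeable p ->
  defect_after_cc_margin Tp Rp Sp p = (Tp - Sp) * (a * (2 * Rp - (Tp + Sp)) - d).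
Proof.
  intros [E1 [E2 [E3 _]]] Ha; unfold agreeable in Ha; unfold defect_after_cc_margin.
  replace (1 - p CD) with (- (p CD - 1)) by ring.
  rewrite E2, E3; replace g with (- (a + b) * Rp) by lra; ring.
Qed.

Lemma press_dyson_alld_margin {Tp Rp Pp Sp p a b g d} :
  press_dyson Tp Rp Pp Sp p a b g d -> agreeable p ->
  always_defect_margin Tp Rp Pp p = (Rp - Pp) * (a * (Tp - Sp) - d).
Proof.
  intros [E1 [E2 [_ E4]]] Ha; unfold agreeable in Ha; unfold always_defect_margin.
  replace (1 - p CD) with (- (p CD - 1)) by ring.
  rewrite E2, E4; replace g with (- (a + b) * Rp) by lra; ring.
Qed.

Lemma press_dyson_eq0 {Tp Rp Pp Sp p a b g d} :
  Tp <> Sp -> Rp <> Pp -> press_dyson Tp Rp Pp Sp p a b g d -> agreeable p ->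
  p CD = 1 /\ p DC = 0 /\ p DD = 0 -> a = 0 /\ b = 0 /\ g = 0 /\ d = 0.
Proof.
  intros HTS HRP [E1 [E2 [E3 E4]]] Ha [H2 [H3 H4]]; unfold agreeable in Ha.
  assert (Hsum : (a + b) * (Rp - Pp) = 0) by lra.
  assert (Hdiff : (a - b) * (Tp - Sp) = 0) by lra.
  apply Rmult_integral in Hsum; apply Rmult_integral in Hdiff.
  destruct Hsum as [Hsum | ]; [| lra]; destruct Hdiff as [Hdiff | ]; [| lra].
  assert (a = 0) by lra; assert (b = 0) by lra; subst; lra.
Qed.

Lemma Rdiv_le_iff x y z : 0 < y -> x / y <= z <-> x <= z * y.
Proof.
  intro Hy; unfold Rdiv; split; intro H.
  - apply (Rmult_le_compat_r y) in H; [| lra].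
    rewrite Rmult_assoc, Rinv_l, Rmult_1_r in H; lra.
  - apply (Rmult_le_reg_r y); [exact Hy |].
    rewrite Rmult_assoc, Rinv_l, Rmult_1_r; lra.
Qed.

Lemma Rdiv_lt_iff x y z : 0 < y -> x / y < z <-> x < z * y.
Proof.
  intro Hy; unfold Rdiv; split; intro H.
  - apply (Rmult_lt_compat_r y) in H; [| lra].
    rewrite Rmult_assoc, Rinv_l, Rmult_1_r in H; lra.
  - apply (Rmult_lt_reg_r y); [exact Hy |].
    rewrite Rmult_assoc, Rinv_l, Rmult_1_r; lra.
Qed.

Lemma Rmax_div_le_iff d x y a :
  0 < x -> 0 < y -> Rmax (d / x) (d / y) <= a <-> d <= a * x /\ d <= a * y.
Proof.
  intros Hx Hy; rewrite <- (Rdiv_le_iff d x a Hx), <- (Rdiv_le_iff d y a Hy).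
  split; [intro H; split; eapply Rle_trans; [apply Rmax_l | exact H | apply Rmax_r | exact H] |].
  intros [H1 H2]; apply Rmax_lub; assumption.
Qed.

Lemma Rmax_div_lt_iff d x y a :
  0 < x -> 0 < y -> Rmax (d / x) (d / y) < a <-> d < a * x /\ d < a * y.
Proof.
  intros Hx Hy; rewrite Rmax_Rlt, (Rdiv_lt_iff d x a Hx), (Rdiv_lt_iff d y a Hy); tauto.
Qed.

Theorem theorem1p8 (Tp Rp Pp Sp : R) (p : outcome -> R) (a b g d : R) :
  Tp > Rp -> Rp > Pp -> Pp > Sp -> 2 * Rp > Tp + Sp ->
  memory_one p -> agreeable p ->
  press_dyson Tp Rp Pp Sp p a b g d ->
  ~ (a = 0 /\ b = 0 /\ g = 0 /\ d = 0) ->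
  (nash_type Tp Rp Pp Sp p <-> Rmax (d / (Tp - Sp)) (d / (2 * Rp - (Tp + Sp))) <= a) /\
  (good Tp Rp Pp Sp p <-> Rmax (d / (Tp - Sp)) (d / (2 * Rp - (Tp + Sp))) < a).
Proof.
  intros HTR HRP HPS H2R Hp Ha Hpd Hnz.
  assert (Hnt : ~ (p CD = 1 /\ p DC = 0 /\ p DD = 0)).
  { intro Htriv; apply Hnz; refine (press_dyson_eq0 _ _ Hpd Ha Htriv); lra. }
  rewrite (nash_type_iff_margins _ _ _ _ HTR HRP HPS H2R _ Hp Ha Hnt),
    (good_iff_margins _ _ _ _ HTR HRP HPS H2R _ Hp Ha Hnt),
    (press_dyson_alt_margin Hpd Ha), (press_dyson_alld_margin Hpd Ha),
    Rmax_div_le_iff, Rmax_div_lt_iff by lra.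
  split; split; intros [H1 H2]; split; nra.
Qed.
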